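(* There exist two pairwise non-isomorphic Steiner systems $S(2,7,589)$. In particular, a Steiner system $S(2,7,589)$ exists.
   Context: For integers $2\le t<k<v$, a Steiner system $S(t,k,v)$ is a pair $(V,\mathcal B)$ where $V$ is a set with $|V|=v$ and $\mathcal B$ is a family of $k$-element subsets of $V$ (blocks) such that every $t$-element subset of $V$ is contained in exactly one block. Two Steiner systems $(V,\mathcal B)$ and $(V',\mathcal B')$ are isomorphic if there is a bijection $V\to V'$ mapping $\mathcal B$ onto $\mathcal B'$. *)

From mathcomp Require Import all_boot.
Set Implicit Arguments. Unset Strict Implicit. Unset Printing Implicit Defensive.

(* A Steiner system S(t,k,v) on the point set 'I_v (any v-element set is in
   bijection with 'I_v): a family of blocks, each a k-subset, such that every
   t-subset is contained in exactly one block. *)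
Definition steiner_system (t k v : nat) (B : {set {set 'I_v}}) : Prop :=
  (forall b, b \in B -> #|b| = k) /\
  (forall T : {set 'I_v}, #|T| = t ->
     #|[set b in B | T \subset b]| = 1).

Definition steiner_iso (v : nat) (B1 B2 : {set {set 'I_v}}) : Prop :=
  exists f : 'I_v -> 'I_v, bijective f /\ [set f @: (b : {set 'I_v}) | b in B1] = B2.
Arguments steiner_system : clear implicits.

From mathcomp Require Import all_boot all_order all_algebra.
Set Implicit Arguments. Unset Strict Implicit. Unset Printing Implicit Defensive.
Import Order.TTheory GRing.Theory.

(* Both systems are developments of difference families in Z/589Z.  Call a point
   p of a Steiner 2-design m-rich if two distinct blocks avoiding p are both met
   by at least m common blocks through p; this is invariant under isomorphism.
   A cyclic design is point-transitive, so it has an m-rich point iff 0 is m-rich.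
   Label each line through 0 by its least nonzero point; the lines through 0
   meeting a block M that avoids 0 then correspond to a 7-set of labels, and two
   such blocks are 6-rich partners iff their label sets share 6 labels, i.e. iff
   they have a common one-point deletion.  For the first system an explicit pair
   of blocks shares 6 labels; for the second all one-point deletions of all
   label sets are distinct, which a sort certifies. *)

Lemma uniq_flatten_mem_inj (S T : eqType) (F : S -> seq T) (s : seq S) x y a :
  uniq (flatten (map F s)) -> x \in s -> y \in s -> a \in F x -> a \in F y -> x = y.
Proof.
elim: s => //= z s IHs; rewrite cat_uniq => /and3P[_ disj_z uniq_s].
have notin_s u : u \in s -> a \in F u -> a \in F z -> False.
  move=> us aFu aFz; move/hasP: disj_z; apply; exists a => //.
  by apply/flatten_mapP; exists u.
rewrite !inE => /predU1P[-> | xs] /predU1P[-> | ys] aFx aFy //.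
- by case: (notin_s y ys aFy aFx).
- by case: (notin_s x xs aFx aFy).
- exact: IHs.
Qed.

Lemma uniq_map_inj_in (S T : eqType) (f : S -> T) (s : seq S) :
  uniq (map f s) -> {in s &, injective f}.
Proof.
elim: s => //= z s IHs /andP[fz_notin uniq_fs] x y.
rewrite !inE => /predU1P[-> | xs] /predU1P[-> | ys] // fxy.
- by move: fz_notin; rewrite fxy map_f.
- by move: fz_notin; rewrite -fxy map_f.
- exact: IHs.
Qed.

Lemma card_imsetI_kernel (aT rT1 rT2 : finType) (f : aT -> rT1) (g : aT -> rT2)
    (X Y : {set aT}) :
  {in X :|: Y &, forall x y, (f x == f y) = (g x == g y)} ->
  #|f @: X :&: f @: Y| = #|g @: X :&: g @: Y|.
Proof.
have le (rT rT' : finType) (f1 : aT -> rT) (g1 : aT -> rT') :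
    {in X :|: Y &, forall x y, (f1 x == f1 y) = (g1 x == g1 y)} ->
    #|f1 @: X :&: f1 @: Y| <= #|g1 @: X :&: g1 @: Y|.
  move=> kerfg; pose h u := omap f1 [pick z in X :|: Y | g1 z == u].
  rewrite -(card_imset _ (@Some_inj _)); apply: leq_trans (leq_imset_card h _).
  apply/subset_leq_card/subsetP => _ /imsetP[_ /setIP[/imsetP[x xX ->]] /imsetP[y yY fxy] ->].
  have xXY : x \in X :|: Y by rewrite inE xX.
  have yXY : y \in X :|: Y by rewrite inE yY orbT.
  apply/imsetP; exists (g1 x).
    rewrite inE imset_f //=; apply/imsetP; exists y => //.
    by apply/eqP; rewrite -kerfg // fxy.
  rewrite /h; case: pickP => [z /andP[zXY /eqP gzx] | /(_ x)]; last by rewrite xXY eqxx.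
  by congr Some; apply/eqP; rewrite kerfg // gzx.
move=> kerfg; apply/eqP; rewrite eqn_leq !le // => x y xXY yXY.
by rewrite kerfg.
Qed.

Lemma setD1_eq_setI (T : finType) (A A' : {set T}) a k :
  #|A| = k.+1 -> k <= #|A :&: A'| -> a \in A -> a \notin A' -> A :\ a = A :&: A'.
Proof.
move=> cardA le_k aA aNA'; apply/esym/eqP; rewrite eqEcard; apply/andP; split.
  apply/subsetP => x /setIP[xA xA']; rewrite !inE xA andbT.
  by apply: contraNneq aNA' => <-.
by move: cardA; rewrite (cardsD1 a) aA add1n => -[->].
Qed.

Lemma setD1_common (T : finType) (A A' : {set T}) k :
  #|A| = k.+1 -> #|A'| = k.+1 -> k <= #|A :&: A'| ->
  exists a a', [/\ a \in A, a' \in A' & A :\ a = A' :\ a'].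
Proof.
move=> cardA cardA' le_k; have [subAA' | /subsetPn[a aA aNA']] := boolP (A \subset A').
  have /card_gt0P[a aA] : 0 < #|A| by rewrite cardA.
  have eqAA' : A = A' by apply/setP/subset_cardP; rewrite ?cardA ?cardA'.
  by exists a, a; rewrite -eqAA'.
have /subsetPn[a' a'A' a'NA] : ~~ (A' \subset A).
  apply: contra aNA' => subA'A.
  by rewrite (elimT (subset_cardP _) subA'A) // cardA cardA'.
exists a, a'; split => //.
by rewrite (setD1_eq_setI (A' := A') cardA) // (setD1_eq_setI (A' := A) cardA') 1?setIC.
Qed.

Definition deletions (T : eqType) (s : seq T) : seq (seq T) := [seq rem a s | a <- s].

Section SortedDeletions.
Variables (T : finType) (lt : rel T).
Hypotheses (lt_trans : transitive lt) (lt_irr : irreflexive lt).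

Lemma sorted_deletions_meet (s s' : seq T) k :
  sorted lt s -> sorted lt s' -> size s = k.+1 -> size s' = k.+1 ->
  k <= #|[set x in s] :&: [set x in s']| ->
  exists2 r, r \in deletions s & r \in deletions s'.
Proof.
move=> lt_s lt_s' size_s size_s' le_k.
have uniq_s : uniq s := sorted_uniq lt_trans lt_irr lt_s.
have uniq_s' : uniq s' := sorted_uniq lt_trans lt_irr lt_s'.
have card_set (u : seq T) : uniq u -> #|[set x in u]| = size u.
  by move=> uniq_u; rewrite cardsE; apply/card_uniqP.
have card_s : #|[set x in s]| = k.+1 by rewrite card_set.
have card_s' : #|[set x in s']| = k.+1 by rewrite card_set.
have [a [a' [a_s a'_s' eq_del]]] := setD1_common card_s card_s' le_k.
have sorted_rem (u : seq T) b : uniq u -> sorted lt u -> sorted lt (rem b u).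
  by move=> uniq_u lt_u; rewrite rem_filter //; apply: sorted_filter lt_u.
exists (rem a s); first by apply: map_f; rewrite inE in a_s.
suff -> : rem a s = rem a' s' by apply: map_f; rewrite inE in a'_s'.
apply: (irr_sorted_eq lt_trans lt_irr); rewrite ?sorted_rem // => x.
move/setP/(_ x): eq_del; rewrite !inE.
by rewrite (mem_rem_uniq _ uniq_s) (mem_rem_uniq _ uniq_s') !inE.
Qed.

End SortedDeletions.

Section Transversals.
Variable v : nat.
Implicit Types (B : {set {set 'I_v}}) (L M : {set 'I_v}) (p x y : 'I_v).

Definition transversals B p M M' : {set {set 'I_v}} :=
  [set L in B | [&& p \in L, ~~ [disjoint L & M] & ~~ [disjoint L & M']]].

Definition rich_point m B p := exists M M',
  [/\ M \in B, M' \in B, M != M', p \notin M & p \notin M'] /\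
  m <= #|transversals B p M M'|.

Lemma rich_point_iso m B1 B2 (f : 'I_v -> 'I_v) p :
  bijective f -> [set f @: (L : {set 'I_v}) | L in B1] = B2 ->
  rich_point m B1 p -> rich_point m B2 (f p).
Proof.
move=> /bij_inj f_inj <- [M [M'] [[MB1 M'B1 neqMM' pNM pNM'] le_m]].
have imf_inj : injective (fun L : {set 'I_v} => f @: L) := imset_inj f_inj.
have meets_imf (L N : {set 'I_v}) : ~~ [disjoint f @: L & f @: N] = ~~ [disjoint L & N].
  by rewrite -!setI_eq0 -imsetI ?imset_eq0 // => x y _ _; apply: f_inj.
exists (f @: M), (f @: M'); split.
  split; rewrite ?(inj_eq imf_inj) ?mem_imset //; exact: imset_f.
apply: leq_trans le_m _; rewrite -(card_imset _ imf_inj).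
apply/subset_leq_card/subsetP => _ /imsetP[L + ->]; rewrite !inE.
case/and4P => LB1 pL LM LM'.
by rewrite (imset_f (fun L => f @: L)) // mem_imset // !meets_imf pL LM LM'.
Qed.

Section SteinerLines.
Variables (k : nat) (B : {set {set 'I_v}}).
Hypothesis steinerB : steiner_system 2 k v B.

Lemma steiner_pair x y : x != y ->
  exists L, [set L in B | (x \in L) && (y \in L)] = [set L].
Proof.
move=> neq_xy; have card_xy : #|[set x; y]| = 2 by rewrite cards2 neq_xy.
have /eqP/cards1P[L eq_L] := steinerB.2 _ card_xy.
by exists L; rewrite -eq_L; apply/setP => N; rewrite !inE subUset !sub1set.
Qed.

Lemma steiner_block_exists x y : x != y ->
  exists2 L, L \in B & (x \in L) && (y \in L).
Proof.
move=> /steiner_pair[L eq_L]; have := set11 L.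
by rewrite -eq_L inE => /andP[LB xyL]; exists L.
Qed.

Lemma steiner_block_uniq x y L L' : x != y -> L \in B -> L' \in B ->
  x \in L -> y \in L -> x \in L' -> y \in L' -> L = L'.
Proof.
move=> /steiner_pair[b eq_b] LB L'B xL yL xL' yL'.
have in_b N : N \in B -> x \in N -> y \in N -> N = b.
  by move=> NB xN yN; apply/set1P; rewrite -eq_b inE NB xN yN.
by rewrite (in_b L) // (in_b L').
Qed.

Definition line p x : {set 'I_v} := odflt set0 [pick L in B | (p \in L) && (x \in L)].

Lemma lineP p x : x != p -> [/\ line p x \in B, p \in line p x & x \in line p x].
Proof.
move=> neq_xp; rewrite /line; case: pickP => [L /andP[LB /andP[pL xL]] // | noL].
have [L LB /andP[xL pL]] := steiner_block_exists neq_xp.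
by move: (noL L); rewrite LB pL xL.
Qed.

Lemma line_uniq p x L : x != p -> L \in B -> p \in L -> x \in L -> line p x = L.
Proof.
move=> neq_xp LB pL xL; have [lineB p_line x_line] := lineP neq_xp.
exact: (steiner_block_uniq neq_xp).
Qed.

Lemma line_inj p M : M \in B -> p \notin M -> {in M &, injective (line p)}.
Proof.
move=> MB pNM x y xM yM eq_line.
have neq_xp : x != p by apply: contraNneq pNM => <-.
have neq_yp : y != p by apply: contraNneq pNM => <-.
apply/eqP; apply: contraNT pNM => neq_xy.
have [lineB p_line x_line] := lineP neq_xp.
have [_ _ y_line] := lineP neq_yp; rewrite -eq_line in y_line.
by rewrite -(steiner_block_uniq neq_xy lineB MB x_line y_line xM yM).
Qed.

Lemma transversalsE p M M' : p \notin M -> p \notin M' ->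
  transversals B p M M' = line p @: M :&: line p @: M'.
Proof.
move=> pNM pNM'.
have line_of (N L : {set 'I_v}) x : p \notin N -> x \in N -> L \in B -> p \in L -> x \in L ->
    L \in line p @: N.
  move=> pNN xN LB pL xL; have neq_xp : x != p by apply: contraNneq pNN => <-.
  by rewrite -(line_uniq neq_xp LB pL xL) imset_f.
have meets_line (N : {set 'I_v}) x : p \notin N -> x \in N -> ~~ [disjoint line p x & N].
  move=> pNN xN; have neq_xp : x != p by apply: contraNneq pNN => <-.
  have [_ _ x_line] := lineP neq_xp.
  by rewrite -setI_eq0; apply/set0Pn; exists x; rewrite inE x_line.
apply/setP => L; rewrite !inE; apply/idP/idP.
  case/and4P => LB pL; rewrite -!setI_eq0 => /set0Pn[x /setIP[xL xM]].
  by move=> /set0Pn[y /setIP[yL yM']]; rewrite (line_of M L x) ?(line_of M' L y).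
case/andP => /imsetP[x xM ->] /imsetP[y yM' eq_line].
have neq_xp : x != p by apply: contraNneq pNM => <-.
have [lineB p_line _] := lineP neq_xp.
by rewrite lineB p_line meets_line // eq_line meets_line.
Qed.

Definition labels_lines p (lab : 'I_v -> 'I_v) :=
  forall x y, x != p -> y != p -> (lab x == lab y) = (line p x == line p y).

Lemma card_transversals p M M' lab : labels_lines p lab ->
  p \notin M -> p \notin M' -> #|transversals B p M M'| = #|lab @: M :&: lab @: M'|.
Proof.
move=> lab_lines pNM pNM'; rewrite transversalsE //.
apply/esym/card_imsetI_kernel => x y; rewrite !inE => xMM' yMM'.
by apply: lab_lines; [move: xMM' | move: yMM']; apply: contraTneq => ->; rewrite negb_or pNM.
Qed.

Lemma card_labels_block p M lab : labels_lines p lab ->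
  M \in B -> p \notin M -> #|lab @: M| = #|M|.
Proof.
move=> lab_lines MB pNM; apply: card_in_imset => x y xM yM /eqP.
have neq_p z : z \in M -> z != p by move=> zM; apply: contraNneq pNM => <-.
by rewrite lab_lines ?neq_p // => /eqP; apply: (line_inj MB pNM).
Qed.

End SteinerLines.
End Transversals.

(* The same list as [enum 'I_n.+1], but one that [vm_compute] evaluates quickly. *)
Definition residues n : seq 'I_n.+1 := map inZp (iota 0 n.+1).

Lemma residuesE n : residues n = enum 'I_n.+1.
Proof.
apply: (inj_map val_inj); rewrite val_enum_ord -map_comp.
rewrite -[RHS]map_id; apply/eq_in_map => i; rewrite mem_iota /= => lt_i.
by rewrite modn_small.
Qed.

Section CyclicDesigns.
Variable n : nat.
Local Open Scope ring_scope.
Local Notation G := 'I_n.+1.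
Implicit Types (D : seq (seq G)) (A : seq G) (M : {set G}) (d s t x y : G).

Definition translate A t : {set G} := [set x + t | x in A].

Definition development D : {set {set G}} :=
  [set:: [seq translate A t | A <- D, t <- enum G]].

Definition offdiagonal A : seq (G * G) :=
  [seq xy <- [seq (x, y) | x <- A, y <- A] | xy.1 != xy.2].

Definition based_pairs D : seq (seq G * (G * G)) :=
  [seq (A, xy) | A <- D, xy <- offdiagonal A].

Definition difference (q : seq G * (G * G)) : G := q.2.1 - q.2.2.

Definition difference_family D :=
  all uniq D && perm_eq (map difference (based_pairs D)) [seq d <- residues n | d != 0].

Lemma mem_translate A t x : (x \in translate A t) = (x - t \in A).
Proof.
apply/imsetP/idP => [[y yA ->] | xtA]; first by rewrite addrK.
by exists (x - t); rewrite ?subrK.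
Qed.

Lemma card_translate A t : uniq A -> #|translate A t| = size A.
Proof. by move=> uniq_A; rewrite card_imset; [apply/card_uniqP | apply: addIr]. Qed.

Lemma developmentP D M :
  reflect (exists2 A, A \in D & exists t, M = translate A t) (M \in development D).
Proof.
rewrite inE; apply: (iffP allpairsP) => [[[A t] [/= AD _ ->]] | [A AD [t ->]]].
  by exists A => //; exists t.
by exists (A, t); rewrite mem_enum.
Qed.

Lemma translate_development D A t : A \in D -> translate A t \in development D.
Proof. by move=> AD; apply/developmentP; exists A => //; exists t. Qed.

Lemma mem_based_pairs D A x y :
  ((A, (x, y)) \in based_pairs D) = [&& A \in D, x \in A, y \in A & x != y].
Proof.
apply/allpairsPdep/and4P => [[A' [[x' y'] [A'D + [-> -> ->]]]] | [AD xA yA neq_xy]].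
  rewrite mem_filter => /andP[/= neq /allpairsP[[u w] [/= uA wA [eq_u eq_w]]]].
  by subst x' y'.
exists A, (x, y); split=> //.
by rewrite mem_filter neq_xy; apply/allpairsP; exists (x, y).
Qed.

Lemma translate_addr A t s : [set z + s | z in translate A t] = translate A (t + s).
Proof. by rewrite -imset_comp; apply: eq_imset => x /=; rewrite addrA. Qed.

Lemma development_translate D s :
  [set [set z + s | z in (M : {set G})] | M in development D] = development D.
Proof.
apply/setP => M; apply/imsetP/developmentP.
  case=> _ /developmentP[A AD [t ->]] ->.
  by exists A => //; exists (t + s); rewrite translate_addr.
case=> A AD [t ->]; exists (translate A (t - s)); first exact: translate_development.
by rewrite translate_addr subrK.
Qed.

Lemma rich_point_development m D p :
  rich_point m (development D) p -> rich_point m (development D) 0.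
Proof.
move=> rich_p; rewrite -(subrr p).
apply: (rich_point_iso (f := fun z => z - p)) rich_p; last exact: development_translate.
by exists (fun z => z + p) => z; [rewrite subrK | rewrite addrK].
Qed.

(* If x = a - b with a, b in the base block A, the line through 0 and x is A - b.
   The [let]s here and in the certificates below make [vm_compute] build the
   differences and the label table only once. *)
Definition line_through_zero D : G -> seq G :=
  let ps := based_pairs D in let ds := map difference ps in
  fun x => let: (A, (_, b)) := nth ([::], (0, 0)) ps (index x ds) in [seq y - b | y <- A].

Definition least_nonzero (l : seq G) : G :=
  head 0 (sort (relpre val leq) [seq y <- l | y != 0]).

Definition label_table D : seq G :=
  let pts := line_through_zero D in [seq least_nonzero (pts x) | x <- residues n].

Lemma least_nonzeroP (l : seq G) x : x \in l -> x != 0 ->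
  least_nonzero l \in l /\ least_nonzero l != 0.
Proof.
move=> xl neq_x0; rewrite /least_nonzero.
have : x \in sort (relpre val leq) [seq y <- l | y != 0] by rewrite mem_sort mem_filter neq_x0.
case: (sort _ _) (mem_sort (relpre val leq) [seq y <- l | y != 0]) => // y ys eq_mem _.
by have := eq_mem y; rewrite mem_head mem_filter => /esym/andP[].
Qed.

Lemma sort_val_perm (l l' : seq G) :
  reflect (sort (relpre val leq) l = sort (relpre val leq) l') (perm_eq l l').
Proof.
apply: perm_sortP; first by move=> x y; apply: leq_total.
- exact: relpre_trans leq_trans.
by move=> x y /anti_leq/val_inj.
Qed.

Lemma eq_least_nonzero (l l' : seq G) : uniq l -> uniq l' -> l =i l' ->
  least_nonzero l = least_nonzero l'.
Proof.
move=> uniq_l uniq_l' eq_l; congr head; apply/sort_val_perm/uniq_perm.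
- exact: filter_uniq.
- exact: filter_uniq.
by move=> y; rewrite !mem_filter eq_l.
Qed.

Definition zero_label D x : G := nth 0 (label_table D) x.

Lemma zero_labelE D x : zero_label D x = least_nonzero (line_through_zero D x).
Proof.
by rewrite /zero_label /label_table residuesE (nth_map 0) ?size_enum_ord ?nth_ord_enum.
Qed.

Definition block_labels (tab : seq G) (q : seq G * G) : seq G :=
  sort (relpre val leq) [seq nth 0 tab (nat_of_ord (y + q.2)) | y <- q.1].

Definition blocks_avoiding_zero D : seq (seq G * G) :=
  [seq q <- [seq (A, t) | A <- D, t <- residues n] | - q.2 \notin q.1].

Definition no_rich_zero_check D : bool :=
  let tab := label_table D in
  let keys : seq (seqlexi G) :=
    flatten [seq deletions (block_labels tab q) | q <- blocks_avoiding_zero D] in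
  sorted <%O (sort <=%O keys).

Definition rich_zero_check m D A t A' t' : bool :=
  let tab := label_table D in
  [&& A \in D, A' \in D, - t \notin A, - t' \notin A',
      has (fun y => y + t - t' \notin A') A &
      (m <= size [seq z <- block_labels tab (A, t) | z \in block_labels tab (A', t')])%N].

Section DifferenceFamily.
Variable D : seq (seq G).
Hypothesis dfD : difference_family D.

Lemma difference_family_uniq A : A \in D -> uniq A.
Proof. by case/andP: dfD => /allP uniqD _; apply: uniqD. Qed.

Lemma difference_family_cover d : d != 0 ->
  exists2 q, q \in based_pairs D & difference q = d.
Proof.
case/andP: dfD => _ /perm_mem eqD neq_d0.
have /mapP[q q_pairs ->] : d \in map difference (based_pairs D).
  by rewrite eqD mem_filter neq_d0 residuesE mem_enum.
by exists q.
Qed.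

Lemma difference_family_inj : {in based_pairs D &, injective difference}.
Proof.
case/andP: dfD => _ /perm_uniq eqD; apply: uniq_map_inj_in.
by rewrite eqD residuesE; apply/filter_uniq/enum_uniq.
Qed.

Lemma development_steiner (k : nat) :
  all (fun A => size A == k) D -> steiner_system 2 k n.+1 (development D).
Proof.
move=> /allP sizeD; split.
  move=> M /developmentP[A AD [t ->]].
  by rewrite card_translate ?difference_family_uniq //; apply/eqP/sizeD.
move=> T /eqP/cards2P[x [y [neq_xy ->]]].
have neq_0 : x - y != 0 by rewrite subr_eq0.
have [[A [a b]] q_pairs diff_ab] := difference_family_cover neq_0.
rewrite /difference /= in diff_ab.
move: (q_pairs); rewrite mem_based_pairs => /and4P[AD aA bA _].
apply/eqP/cards1P; exists (translate A (x - a)); apply/setP => M.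
rewrite in_set in_set1 subUset !sub1set; apply/idP/eqP => [| ->].
  case/and3P => /developmentP[A' A'D [t ->]]; rewrite !mem_translate => xtA' ytA'.
  have q'_pairs : (A', (x - t, y - t)) \in based_pairs D.
    by rewrite mem_based_pairs A'D xtA' ytA' (inj_eq (addIr _)) neq_xy.
  have := difference_family_inj q'_pairs q_pairs.
  rewrite /difference /= diff_ab opprB addrA subrK => /(_ erefl) [-> <-].
  by rewrite subKr.
rewrite translate_development // !mem_translate subKr aA /=.
by rewrite opprB addrCA -opprB -diff_ab subKr.
Qed.

Variable k : nat.
Hypothesis sizeD : all (fun A => size A == k) D.
Let steinerD := development_steiner sizeD.

Lemma line_through_zeroP x : x != 0 -> exists2 A, A \in D &
  exists b, [/\ x + b \in A, b \in A & line_through_zero D x = [seq y - b | y <- A]].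
Proof.
move=> neq_x0; rewrite /line_through_zero.
set ps := based_pairs D; set i := index x _.
have [q q_pairs diff_q] := difference_family_cover neq_x0.
have x_diffs : x \in map difference ps by rewrite -diff_q map_f.
have i_lt : (i < size ps)%N by rewrite -(size_map difference) index_mem.
have := nth_index 0 x_diffs; rewrite (nth_map ([::], (0, 0))) // -/i.
case: (nth _ ps i) (mem_nth ([::], (0, 0)) i_lt) => A [a b].
rewrite mem_based_pairs /difference /= => /and4P[AD aA bA _] <-.
by exists A => //; exists b; rewrite subrK.
Qed.

Lemma line_through_zeroE x : x != 0 ->
  uniq (line_through_zero D x) /\ line_through_zero D x =i line (development D) 0 x.
Proof.
move=> neq_x0; have [A AD [b [xbA bA ->]]] := line_through_zeroP neq_x0.
have mem_shift y : (y \in [seq z - b | z <- A]) = (y + b \in A).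
  by apply/mapP/idP => [[z zA ->] | ybA]; [rewrite subrK | exists (y + b); rewrite ?addrK].
split; first by rewrite map_inj_uniq ?difference_family_uniq //; apply: addIr.
have -> : line (development D) 0 x = translate A (- b).
  by apply: (line_uniq steinerD); rewrite ?translate_development ?mem_translate ?opprK ?add0r.
by move=> y; rewrite mem_shift mem_translate opprK.
Qed.

Lemma labels_lines_zero_label : labels_lines (development D) 0 (zero_label D).
Proof.
have label_line z : z != 0 ->
    let c := least_nonzero (line_through_zero D z) in
    c != 0 /\ line (development D) 0 c = line (development D) 0 z.
  move=> neq_z0 c; have [_ mem_line] := line_through_zeroE neq_z0.
  have [lineB zero_line z_line] := lineP steinerD neq_z0.
  have [c_line neq_c0] : c \in line_through_zero D z /\ c != 0.
    by apply: (least_nonzeroP _ neq_z0); rewrite mem_line.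
  by split=> //; apply: (line_uniq steinerD neq_c0 lineB zero_line); rewrite -mem_line.
move=> x y neq_x0 neq_y0; rewrite !zero_labelE.
apply/eqP/eqP => [eq_label | eq_line].
  by rewrite -(label_line x neq_x0).2 eq_label (label_line y neq_y0).2.
have [uniq_x mem_x] := line_through_zeroE neq_x0.
have [uniq_y mem_y] := line_through_zeroE neq_y0.
by apply: eq_least_nonzero => // z; rewrite mem_x mem_y eq_line.
Qed.

Lemma block_labelsP A t : A \in D -> 0 \notin translate A t ->
  let s := block_labels (label_table D) (A, t) in
  [/\ (A, t) \in blocks_avoiding_zero D, sorted (relpre val ltn) s, size s = k
    & [set z in s] = zero_label D @: translate A t].
Proof.
move=> AD zNM s; have eq_set : [set z in s] = zero_label D @: translate A t.
  apply/setP => z; rewrite inE mem_sort; apply/mapP/imsetP => [[y /= yA ->] | [x + ->]].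
    by exists (y + t); rewrite ?mem_translate ?addrK.
  by rewrite mem_translate => xtA; exists (x - t); rewrite ?subrK.
have size_s : size s = k by rewrite size_sort size_map; apply/eqP/(allP sizeD).
have uniq_s : uniq s.
  apply/card_uniqP; rewrite -cardsE eq_set size_s.
  rewrite (card_labels_block steinerD labels_lines_zero_label) ?translate_development //.
  by rewrite card_translate ?difference_family_uniq //; apply/eqP/(allP sizeD).
split=> //.
  rewrite mem_filter -sub0r -mem_translate zNM; apply/allpairsP; exists (A, t).
  by rewrite residuesE mem_enum.
rewrite -sorted_map ltn_sorted_uniq_leq (map_inj_uniq val_inj) uniq_s /=.
by rewrite sorted_map sort_sorted // => x y; apply: leq_total.
Qed.

End DifferenceFamily.

Lemma no_rich_zero (k : nat) D : difference_family D -> all (fun A => size A == k.+1) D ->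
  no_rich_zero_check D -> ~ rich_point k (development D) 0.
Proof.
move=> dfD sizeD; rewrite /no_rich_zero_check sort_lt_sorted => uniq_keys.
case=> M [M'] [[/developmentP[A AD [t ->]] /developmentP[A' A'D [t' ->]] neqMM' zNM zNM'] le_k].
have steinerD := development_steiner dfD sizeD.
rewrite (card_transversals steinerD (labels_lines_zero_label dfD sizeD)) // in le_k.
have [q_in sorted_q size_q eq_q] := block_labelsP dfD sizeD AD zNM.
have [q'_in sorted_q' size_q' eq_q'] := block_labelsP dfD sizeD A'D zNM'.
rewrite -eq_q -eq_q' in le_k.
have lt_trans := relpre_trans (f := val : G -> nat) ltn_trans.
have lt_irr : irreflexive (relpre (val : G -> nat) ltn) by move=> x; apply: ltnn.
have [r r_q r_q'] := sorted_deletions_meet lt_trans lt_irr sorted_q sorted_q' size_q size_q' le_k.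
move: neqMM'; have [-> ->] := uniq_flatten_mem_inj uniq_keys q_in q'_in r_q r_q'.
by rewrite eqxx.
Qed.

Lemma rich_zero (m k : nat) D A t A' t' :
  difference_family D -> all (fun A => size A == k) D ->
  rich_zero_check m D A t A' t' -> rich_point m (development D) 0.
Proof.
move=> dfD sizeD /and5P[AD A'D ntA nt'A' /andP[/hasP[y yA yN] le_m]].
have steinerD := development_steiner dfD sizeD.
have zN B s : - s \notin B -> 0 \notin translate B s by rewrite mem_translate sub0r.
have [_ sorted_s _ eq_s] := block_labelsP dfD sizeD AD (zN _ _ ntA).
have [_ _ _ eq_s'] := block_labelsP dfD sizeD A'D (zN _ _ nt'A').
exists (translate A t), (translate A' t'); split.
  split; rewrite ?translate_development ?zN //.
  apply: contraNneq yN => eqMM'; rewrite -mem_translate -eqMM' mem_translate addrK.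
  exact: yA.
rewrite (card_transversals steinerD (labels_lines_zero_label dfD sizeD)) ?zN //.
rewrite -eq_s -eq_s'; set s := block_labels _ (A, t); set s' := block_labels _ (A', t').
have -> : [set z in s] :&: [set z in s'] = [set z in [seq z <- s | z \in s']].
  by apply/setP => z; rewrite !inE mem_filter andbC.
have uniq_s : uniq s := sorted_uniq (relpre_trans ltn_trans) (fun x => ltnn _) sorted_s.
by rewrite cardsE (card_uniqP _) ?filter_uniq.
Qed.

End CyclicDesigns.

Definition Drich : seq (seq 'I_589) := map (map inZp)
  [:: [:: 248; 31; 527; 382; 21; 208; 474];
      [:: 372; 341; 496; 250; 60; 426; 8];
      [:: 558; 217; 155; 546; 508; 544; 107];
      [:: 0; 5; 435; 149; 142; 574; 462];
      [:: 0; 119; 340; 130; 199; 232; 158];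
      [:: 0; 37; 274; 278; 215; 446; 517];
      [:: 0; 56; 160; 373; 405; 484; 289];
      [:: 0; 51; 314; 224; 322; 331; 525];
      [:: 0; 507; 523; 148; 360; 103; 126];
      [:: 0; 97; 193; 299; 222; 466; 490];
      [:: 0; 306; 117; 166; 336; 371; 471];
      [:: 0; 55; 252; 73; 131; 461; 206];
      [:: 0; 1; 26; 87; 495; 501; 68];
      [:: 0; 13; 338; 542; 545; 34; 295]].

Definition Dplain : seq (seq 'I_589) := map (map inZp)
  [:: [:: 186; 465; 403; 505; 239; 63; 557];
      [:: 279; 403; 310; 349; 178; 180; 161];
      [:: 124; 310; 465; 324; 172; 346; 460];
      [:: 0; 9; 194; 386; 121; 514; 543];
      [:: 0; 332; 23; 234; 406; 571; 201];
      [:: 0; 11; 368; 210; 202; 493; 483];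
      [:: 0; 144; 159; 286; 449; 189; 540];
      [:: 0; 51; 314; 224; 71; 287; 231];
      [:: 0; 507; 523; 148; 394; 116; 79];
      [:: 0; 1; 87; 501; 268; 345; 565];
      [:: 0; 495; 68; 26; 135; 554; 489];
      [:: 0; 58; 330; 334; 438; 197; 410];
      [:: 0; 13; 338; 542; 545; 34; 295];
      [:: 0; 12; 312; 455; 50; 122; 227]].

Lemma Drich_size : all (fun A => size A == 7) Drich.
Proof. by []. Qed.

Lemma Dplain_size : all (fun A => size A == 7) Dplain.
Proof. by []. Qed.

Lemma Drich_difference_family : difference_family Drich.
Proof. apply/andP; split; first by vm_compute. by apply/sort_val_perm/eqP; vm_compute. Qed.

Lemma Dplain_difference_family : difference_family Dplain.
Proof. apply/andP; split; first by vm_compute. by apply/sort_val_perm/eqP; vm_compute. Qed.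

Lemma Drich_rich :
  rich_zero_check 6 Drich (nth [::] Drich 12) (inZp 5) (nth [::] Drich 12) (inZp 119).
Proof. by vm_compute. Qed.

Lemma Dplain_not_rich : no_rich_zero_check Dplain.
Proof. by vm_compute. Qed.

Theorem mainTheorem2 :
  exists B1 B2 : {set {set 'I_589}},
    steiner_system 2 7 589 B1 /\ steiner_system 2 7 589 B2 /\
    ~ steiner_iso B1 B2.
Proof.
exists (development Drich), (development Dplain).
split; first exact: (development_steiner Drich_difference_family Drich_size).
split; first exact: (development_steiner Dplain_difference_family Dplain_size).
case=> f [f_bij f_img].
have rich_Drich := rich_zero Drich_difference_family Drich_size Drich_rich.
apply: (no_rich_zero Dplain_difference_family Dplain_size Dplain_not_rich).
exact: rich_point_development (rich_point_iso f_bij f_img rich_Drich).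
Qed.
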